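(* An orientation of a graph $G$ admits a homogeneous labeling if and only if it contains no badly oriented cycle.
   Context: Given an orientation of a (simple) graph $G$, a homogeneous labeling is an assignment of real labels to the arcs such that for every vertex all its outgoing arcs have the same label, all its incoming arcs have the same label, and (if both exist) the label of its incoming arcs is smaller than the label of its outgoing arcs. A cycle $(v_0,v_1,\ldots,v_{n-1})$ of $G$ (indices mod $n$) is badly oriented if there is a vertex $v_i$ whose incident cycle arcs are $v_{i-1}v_i$ and $v_iv_{i+1}$ (i.e. oriented from $v_{i-1}$ to $v_i$ and from $v_i$ to $v_{i+1}$), and there is no vertex $v_j$ whose incident cycle arcs are $v_{j+1}v_j$ and $v_jv_{j-1}$. *)

From mathcomp Require Import all_boot.
From Stdlib Require Import Rdefinitions.
Set Implicit Arguments. Unset Strict Implicit. Unset Printing Implicit Defensive.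

Definition simple_graph (T : finType) (e : rel T) : Prop :=
  symmetric e /\ irreflexive e.

(* An orientation o of e: every arc is an edge, and every edge gets exactly
   one direction. [o x y] means the arc goes from x to y. *)
Definition orientation (T : finType) (e o : rel T) : Prop :=
  (forall x y, o x y -> e x y) /\
  (forall x y, e x y -> (o x y (+) o y x)).

(* A homogeneous labeling: l x y is the label of arc xy (values on non-arcs
   are irrelevant). *)
Definition homogeneous_labeling (T : finType) (o : rel T)
    (l : T -> T -> R) : Prop :=
  forall v : T,
    (forall u w, o v u -> o v w -> l v u = l v w) /\
    (forall u w, o u v -> o w v -> l u v = l w v) /\
    (forall u w, o u v -> o v w -> Rlt (l u v) (l v w)).

Definition graph_cycle (T : finType) (e : rel T) (c : seq T) : Prop :=
  [/\ 3 <= size c, uniq c & cycle e c].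

Definition badly_oriented (T : finType) (o : rel T) (c : seq T) : Prop :=
  (exists2 x, x \in c & o (prev c x) x && o x (next c x)) /\
  ~ (exists2 x, x \in c & o (next c x) x && o x (prev c x)).

From mathcomp Require Import all_boot zify.
From Stdlib Require Import Rdefinitions RIneq.
Set Implicit Arguments. Unset Strict Implicit. Unset Printing Implicit Defensive.

(* Work with darts, i.e. edges traversed in a chosen direction.  Call a step
   (u, v) -> (v, w) admissible unless v -> u and w -> v, and forward if
   u -> v -> w.  Read on darts, a homogeneous labeling is non-decreasing along
   admissible steps and increasing along forward ones; conversely, if no
   closed admissible walk contains a forward step, counting the darts strictly
   below a given one yields such a labeling.  A shortest closed admissible walk
   with a forward step visits no vertex twice, since splitting it at a repeated
   vertex leaves a half with the same property, so it is a badly oriented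
   cycle; and a badly oriented cycle is such a walk. *)

Lemma split_map_dup (A B : eqType) (f : A -> B) (s : seq A) : ~~ uniq (map f s) ->
  exists s1 x s2 y s3, s = s1 ++ x :: s2 ++ y :: s3 /\ f x = f y.
Proof.
elim: s => //= z s IH; rewrite negb_and negbK => /orP[/mapP[y ys fzy]|/IH].
  by case/splitPr: ys => s2 s3; exists [::], z, s2, y, s3.
by move=> [s1 [x [s2 [y [s3 [-> fxy]]]]]]; exists (z :: s1), x, s2, y, s3.
Qed.

Section MapInPath.
Variables (A B : eqType) (f : A -> B) (s : seq A).
Hypothesis Ufs : uniq (map f s).

Lemma next_map_in x : x \in s -> next (map f s) (f x) = f (next s x).
Proof.
have Us := map_uniq Ufs; case/rot_to=> i s' def_s.
rewrite -(next_rot i Us) -(next_rot i Ufs) -map_rot def_s.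
by case: s' {def_s} => [|y s'] /=; rewrite !eqxx.
Qed.

Lemma prev_map_in x : x \in s -> prev (map f s) (f x) = f (prev s x).
Proof.
have Us := map_uniq Ufs; move=> xs.
rewrite -[x in LHS](next_prev Us) -next_map_in ?mem_prev //.
by rewrite prev_next.
Qed.

End MapInPath.

Lemma cycle_cat_cons (A : Type) (R : rel A) x s y t :
  cycle R (x :: s ++ y :: t) = path R x (rcons s y) && path R y (rcons t x).
Proof. by rewrite /= rcons_cat cat_path /= !rcons_path !andbA. Qed.

Lemma uniq_cycleE (A : eqType) (R : rel A) (s : seq A) :
  uniq s -> cycle R s = all (fun x => R x (next s x)) s.
Proof.
move=> Us; apply/idP/allP => [Cs x xs | Rs]; first exact: next_cycle.
exact: cycle_from_next.
Qed.

Lemma connect_Rle (D : finType) (le : rel D) (g : D -> R) :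
  (forall p r, le p r -> (g p <= g r)%R) ->
  forall p r, connect le p r -> (g p <= g r)%R.
Proof.
move=> g_le p r /connectP[s]; elim: s p => [|q s IH] p /=.
  by move=> _ ->; apply: Rle_refl.
by case/andP=> /g_le pq /IH qr /qr; apply: Rle_trans.
Qed.

Section Height.
Variables (D : finType) (le lt : rel D).

Definition below p r :=
  [exists p', exists r', [&& connect le p p', lt p' r' & connect le r' r]].

Definition height r := #|[pred p | below p r]|.

Lemma below_connect q p r : below q p -> connect le p r -> below q r.
Proof.
case/existsP=> p' /existsP[r' /and3P[qp' lt' r'p]] pr.
apply/existsP; exists p'; apply/existsP; exists r'.
by rewrite qp' lt' (connect_trans r'p).
Qed.

Lemma height_connect p r : connect le p r -> height p <= height r.
Proof.
by move=> pr; apply/subset_leq_card/subsetP=> q; rewrite !inE => /below_connect; apply.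
Qed.

Hypotheses (lt_le : subrel lt le) (lt_acyclic : forall p r, lt p r -> ~~ connect le r p).

Lemma height_lt p r : lt p r -> height p < height r.
Proof.
move=> pr; apply/proper_card/properP; split.
  by apply/subsetP=> q; rewrite !inE => /below_connect; apply; apply/connect1/lt_le.
exists p; rewrite !inE.
  by apply/existsP; exists p; apply/existsP; exists r; rewrite !connect0 pr.
apply/existsP=> -[p' /existsP[r' /and3P[pp' /lt_acyclic/negP + r'p]]].
by apply; apply: connect_trans r'p pp'.
Qed.

End Height.

Section Darts.
Variables (T : finType) (e o : rel T).
Hypotheses (He : simple_graph e) (Ho : orientation e o).

Let e_sym : symmetric e := proj1 He.
Let e_irr : irreflexive e := proj2 He.

Lemma arc_edge x y : o x y -> e x y.
Proof. exact: (proj1 Ho). Qed.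

Lemma edge_arcE x y : e x y -> o x y = ~~ o y x.
Proof. by move/(proj2 Ho); case: (o x y); case: (o y x). Qed.

Lemma arc_asym x y : o x y -> ~~ o y x.
Proof. by move=> oxy; rewrite -edge_arcE ?arc_edge. Qed.

Definition along (p : T * T) := o p.1 p.2.

Definition link (p r : T * T) := [&& p.2 == r.1, e p.1 p.2 & e r.1 r.2].

Definition admissible p r := link p r && (along p || along r).

Definition forward p r := link p r && (along p && along r).

(* The second conjunct says that some cyclically consecutive pair is forward. *)
Definition forward_closed_walk q :=
  cycle admissible q && ~~ cycle (fun p r => ~~ forward p r) q.

Definition darts (c : seq T) := [seq (prev c v, v) | v <- c].

Lemma forward_admissible : subrel forward admissible.
Proof. by move=> p r /andP[pr /andP[pp _]]; rewrite /admissible pr pp. Qed.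

Lemma admissible_head_neq p r : admissible p r -> p.2 != r.2.
Proof.
case/andP=> /and3P[/eqP -> _ err] _.
by apply: contraTneq err => ->; rewrite e_irr.
Qed.

Lemma forward_neq p r : forward p r -> p.1 != r.2.
Proof.
case/andP=> /and3P[/eqP pr _ _] /andP[]; rewrite /along -pr => /arc_asym.
by move=> opp; apply: contraTneq => <-.
Qed.

Lemma uniq_darts c : uniq (darts c) = uniq c.
Proof. by rewrite map_inj_uniq // => u v [_ ->]. Qed.

Lemma corner_backwardE u v w :
  e u v -> e v w -> (o w v && o v u) = ~~ (o u v || o v w).
Proof.
move=> euv evw; rewrite (edge_arcE euv) (edge_arcE evw).
by case: (o v u); case: (o w v).
Qed.

Lemma badly_oriented_darts c :
  graph_cycle e c -> badly_oriented o c <-> forward_closed_walk (darts c).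
Proof.
case=> _ Uc Cc.
have dart_inj : injective (fun v => (prev c v, v)) by move=> u v [_ ->].
have Ud : uniq (darts c) by rewrite uniq_darts.
have next_dart v : next (darts c) (prev c v, v) = (v, next c v).
  by rewrite (next_map dart_inj Uc) (prev_next Uc).
have corner v : v \in c -> link (prev c v, v) (v, next c v).
  by move=> vc; rewrite /link /= eqxx (prev_cycle Cc) ?(next_cycle Cc).
rewrite /forward_closed_walk !uniq_cycleE // -has_predC all_map has_map.
rewrite (eq_in_all (a2 := fun v => o (prev c v) v || o v (next c v))); last first.
  by move=> v vc; rewrite /= next_dart /admissible corner.
rewrite (eq_in_has (a2 := fun v => o (prev c v) v && o v (next c v))); last first.
  by move=> v vc; rewrite /= negbK next_dart /forward corner.
have backwardE v : v \in c ->
    (o (next c v) v && o v (prev c v)) = ~~ (o (prev c v) v || o v (next c v)).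
  by move=> vc; rewrite corner_backwardE ?(prev_cycle Cc) ?(next_cycle Cc).
split=> [[[v vc fw] no_bw] | /andP[/allP nbw /hasP[v vc fw]]].
  rewrite andbC; apply/andP; split; first by apply/hasP; exists v.
  apply/allP=> v' v'c; rewrite -[_ || _]negbK -backwardE //.
  by apply/negP=> bw; apply: no_bw; exists v'.
by split; [exists v | case=> v' v'c; rewrite backwardE // nbw].
Qed.

Lemma darts_snd q : uniq (map snd q) -> cycle admissible q -> darts (map snd q) = q.
Proof.
move=> Uq Cq; rewrite /darts -map_comp; apply: map_id_in => p pq /=.
rewrite (prev_map_in Uq pq).
by case/andP: (prev_cycle Cq pq) => /and3P[/eqP -> _ _] _; case: p {pq}.
Qed.

Lemma forward_closed_walk_graph_cycle q :
  uniq (map snd q) -> forward_closed_walk q -> graph_cycle e (map snd q).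
Proof.
move=> Uq /andP[Cq Fq]; split=> //.
  rewrite size_map; case: q Uq Cq Fq => [|p [|r [|? ?]]] //= _.
    by rewrite andbT => /admissible_head_neq; rewrite eqxx.
  case/and3P=> /andP[/and3P[/eqP pr _ _] _] /andP[/and3P[/eqP rp _ _] _] _.
  by rewrite andbT negb_and !negbK => /orP[] /forward_neq; rewrite ?pr ?rp eqxx.
rewrite cycle_map; apply: sub_cycle Cq => p r /andP[/and3P[/eqP pr _ err] _].
by rewrite /= pr.
Qed.

Lemma forward_closed_walk_rot n q :
  forward_closed_walk (rot n q) = forward_closed_walk q.
Proof. by rewrite /forward_closed_walk !rot_cycle. Qed.

(* Let a closed walk enter a vertex v twice, by darts x and y, and leave it by
   a and b; X, Y, A, B tell whether x, y, a, b follow the orientation.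
   Exchanging the two exits splits the walk into a loop through y, a and one
   through x, b; one of them is admissible at v and has a forward step. *)
Lemma corner_swap (X Y A B n1 n2 : bool) :
  X || A -> Y || B -> ~~ (~~ (X && A) && n1 && (~~ (Y && B) && n2)) ->
  (Y || A) && ~~ (~~ (Y && A) && n1) || (X || B) && ~~ (~~ (X && B) && n2).
Proof. by case: X; case: Y; case: A; case: B; case: n1; case: n2. Qed.

Lemma forward_closed_walk_split x y s t : x.2 = y.2 ->
  forward_closed_walk (x :: s ++ y :: t) ->
  forward_closed_walk (y :: s) || forward_closed_walk (x :: t).
Proof.
rewrite /forward_closed_walk !cycle_cat_cons => xy.
case: s => [|a s] /=.
  by case/andP=> /andP[/andP[/admissible_head_neq]]; rewrite xy eqxx.
case: t => [|b t] /=.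
  by case/andP=> /andP[_ /andP[/admissible_head_neq]]; rewrite xy eqxx.
case/andP=> /andP[/andP[xa pa] /andP[yb pb]].
have [lxa lyb] := (proj1 (andP xa), proj1 (andP yb)).
have /and3P[/eqP xa1 ex ea] := lxa.
have /and3P[/eqP yb1 ey eb] := lyb.
have ya : link y a by rewrite /link ey ea -xy xa1 eqxx.
have xb : link x b by rewrite /link ex eb xy yb1 eqxx.
move: xa yb; rewrite /admissible /forward lxa lyb ya xb pa pb !andbT.
exact: corner_swap.
Qed.

Lemma forward_closed_walk_shorten q : forward_closed_walk q ->
  exists2 q', forward_closed_walk q' & uniq (map snd q').
Proof.
have [n] := ubnP (size q); elim: n q => // n IH q /ltnSE q_le_n fq.
have [Uq | /split_map_dup[s1 [x [s2 [y [s3 [def_q xy]]]]]]] :=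
  boolP (uniq (map snd q)); first by exists q.
move: fq; rewrite -(forward_closed_walk_rot (size s1)) def_q rot_size_cat.
rewrite cat_cons -catA cat_cons.
case/forward_closed_walk_split/orP=> // fq'; apply: IH fq';
  by apply: leq_trans q_le_n; rewrite def_q !size_cat /= !size_cat /=; lia.
Qed.

Lemma forward_closed_walk_of_connect p r :
  forward p r -> connect admissible r p -> exists q, forward_closed_walk q.
Proof.
move=> pr /connectP[s rs def_p]; exists (r :: s).
rewrite /forward_closed_walk /= !rcons_path rs -def_p.
by rewrite (forward_admissible pr) pr !andbF.
Qed.

Lemma connect_of_forward_closed_walk q : uniq q -> forward_closed_walk q ->
  exists p r, forward p r /\ connect admissible r p.
Proof.
move=> Uq /andP[Cq]; rewrite uniq_cycleE // -has_predC => /hasP[p pq /negPn pr].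
by exists p, (next q p); split; last apply: (connect_cycle Cq); rewrite ?mem_next.
Qed.

Lemma badly_oriented_cycleP :
  (exists c, graph_cycle e c /\ badly_oriented o c) <->
  (exists p r, forward p r /\ connect admissible r p).
Proof.
split=> [[c [gc /(badly_oriented_darts gc) fq]] | [p [r [pr rp]]]].
  by apply: connect_of_forward_closed_walk fq; rewrite uniq_darts; case: gc.
have [q /forward_closed_walk_shorten[q' fq' Uq']] :=
  forward_closed_walk_of_connect pr rp.
have gc := forward_closed_walk_graph_cycle Uq' fq'.
exists (map snd q'); split=> //; apply/(badly_oriented_darts gc).
by rewrite darts_snd //; case/andP: fq'.
Qed.

Definition dart_label (l : T -> T -> R) p := if along p then l p.1 p.2 else l p.2 p.1.

Section DartLabel.
Variable l : T -> T -> R.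
Hypothesis hl : homogeneous_labeling o l.

Lemma dart_label_admissible p r :
  admissible p r -> (dart_label l p <= dart_label l r)%R.
Proof.
case: p r => [u v] [v' w] /andP[/and3P[/= /eqP <- euv evw]].
rewrite /dart_label /along /=; have [out_eq [in_eq in_lt_out]] := hl v.
case ouv: (o u v); case ovw: (o v w) => //= _.
- exact/Rlt_le/in_lt_out.
- have owv : o w v by rewrite edge_arcE ?ovw // e_sym.
  by rewrite (in_eq u w) //; apply: Rle_refl.
- have ovu : o v u by rewrite edge_arcE ?ouv // e_sym.
  by rewrite (out_eq u w) //; apply: Rle_refl.
Qed.

Lemma dart_label_forward p r : forward p r -> (dart_label l p < dart_label l r)%R.
Proof.
case: p r => [u v] [v' w] /andP[/and3P[/= /eqP <- _ _]].
rewrite /dart_label /along /= => /andP[ouv ovw]; rewrite ouv ovw.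
exact: (proj2 (proj2 (hl v))).
Qed.

End DartLabel.

Lemma connect_out_arcs v u w : o v u -> o v w -> connect admissible (v, u) (v, w).
Proof.
move=> ovu ovw; have [evu evw] := (arc_edge ovu, arc_edge ovw).
apply: (@connect_trans _ _ (u, v)); apply: connect1;
  by rewrite /admissible /link /along /= (e_sym u v) !(eqxx, evu, evw, ovu, ovw, orbT).
Qed.

Lemma connect_in_arcs v u w : o u v -> o w v -> connect admissible (u, v) (w, v).
Proof.
move=> ouv owv; have [euv ewv] := (arc_edge ouv, arc_edge owv).
apply: (@connect_trans _ _ (v, w)); apply: connect1;
  by rewrite /admissible /link /along /= (e_sym v w) !(eqxx, euv, ewv, ouv, owv, orbT).
Qed.

Lemma height_labeling :
  (forall p r, forward p r -> ~~ connect admissible r p) ->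
  homogeneous_labeling o (fun u v => INR (height admissible forward (u, v))).
Proof.
move=> acyclic v; set h := height admissible forward.
have h_eq p r : connect admissible p r -> connect admissible r p -> INR (h p) = INR (h r).
  by move=> pr rp; congr INR; apply/eqP; rewrite eqn_leq !height_connect.
split; [|split] => u w.
- by move=> ovu ovw; apply: h_eq; apply: connect_out_arcs.
- by move=> ouv owv; apply: h_eq; apply: connect_in_arcs.
- move=> ouv ovw; apply/lt_INR/ltP/height_lt => //; first exact: forward_admissible.
  by rewrite /forward /link /along /= eqxx ouv ovw !arc_edge.
Qed.

End Darts.

Theorem mainTheorem14 (T : finType) (e o : rel T) :
  simple_graph e -> orientation e o ->
  ((exists l : T -> T -> R, homogeneous_labeling o l) <->
   ~ (exists c : seq T, graph_cycle e c /\ badly_oriented o c)).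
Proof.
move=> He Ho; have bad_cycleP := badly_oriented_cycleP He Ho.
split=> [[l hl] /bad_cycleP[p [r [pr rp]]] | no_bad].
  have := connect_Rle (dart_label_admissible He Ho hl) rp.
  exact/Rlt_not_le/(dart_label_forward hl pr).
exists (fun u v => INR (height (admissible e o) (forward e o) (u, v))).
apply: height_labeling => // p r pr; apply/negP => rp.
by apply: no_bad; apply/bad_cycleP; exists p, r.
Qed.
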